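(* Let $G$ be a finite simple connected graph with at least one edge, let $W$ be a minimal vertex cover of $G$, and let $s\ge 0$. Then the ideal $\mathfrak p=\langle\mathcal{J}_s(W)\rangle\subseteq\mathcal{J}_s(R)$ is a minimal prime of $\mathcal{J}_s(I(G))$, and the $\mathfrak p$-primary component of $\mathcal{J}_s(I(G))$ is $\mathfrak p$ itself.
   Context: $R=k[x_1,\dots,x_n]$ over a field $k$, with the vertices of $G$ identified with the variables. The edge ideal is $I(G)=\langle x_ix_j : \{x_i,x_j\}\in E(G)\rangle$. A vertex cover is a set of vertices meeting every edge; minimal if no proper subset is a vertex cover. $\mathcal{J}_s(R)=k[x_i^{(l)} : 1\le i\le n,\ 0\le l\le s]$. For $I=\langle f_1,\dots,f_r\rangle\subseteq R$, write $f_m(x_1^{(0)}+x_1^{(1)}t+\cdots+x_1^{(s)}t^s,\dots)\equiv\sum_{l=0}^s\alpha_m^{(l)}t^l \pmod{t^{s+1}}$; then $\mathcal{J}_s(I)=\langle\alpha_m^{(l)}\rangle\subseteq\mathcal{J}_s(R)$. For $W\subseteq V(G)$, $\mathcal{J}_s(W)=\{x^{(j)} : x\in W,\ 0\le j\le s\}$. *)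

From HB Require Import structures.
From mathcomp Require Import all_boot all_order all_algebra.
From mathcomp Require Import mpoly.
Set Implicit Arguments. Unset Strict Implicit. Unset Printing Implicit Defensive.
Import Order.TTheory GRing.Theory.
Local Open Scope ring_scope.

Definition ideal_gen (A : comPzRingType) (S : A -> Prop) : A -> Prop :=
  fun f => exists (m : nat) (a g : 'I_m -> A),
      (forall i, S (g i)) /\ f = \sum_(i < m) a i * g i.

Definition is_ideal (A : comPzRingType) (I : A -> Prop) : Prop :=
  I 0 /\ (forall f g, I f -> I g -> I (f + g)) /\ (forall a f, I f -> I (a * f)).

Definition subideal (A : comPzRingType) (I J : A -> Prop) : Prop :=
  forall f, I f -> J f.

Definition same_ideal (A : comPzRingType) (I J : A -> Prop) : Prop :=
  forall f, I f <-> J f.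

Definition is_prime_ideal (A : comPzRingType) (P : A -> Prop) : Prop :=
  is_ideal P /\ ~ P 1 /\ (forall f g, P (f * g) -> P f \/ P g).

Definition is_minimal_prime (A : comPzRingType) (I P : A -> Prop) : Prop :=
  is_prime_ideal P /\ subideal I P /\
  (forall Q, is_prime_ideal Q -> subideal I Q -> subideal Q P -> same_ideal Q P).

Definition radical (A : comPzRingType) (I : A -> Prop) : A -> Prop :=
  fun f => exists k : nat, I (f ^+ k).

Definition is_primary_ideal (A : comPzRingType) (Q : A -> Prop) : Prop :=
  is_ideal Q /\ ~ Q 1 /\
  (forall f g, Q (f * g) -> Q f \/ radical Q g).

Definition primary_decomposition (A : comPzRingType) (I : A -> Prop)
  (m : nat) (Q : 'I_m -> A -> Prop) : Prop :=
  (forall i, is_primary_ideal (Q i)) /\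
  (forall f, I f <-> forall i, Q i f).

Definition simple_graph (n : nat) (e : rel 'I_n) : Prop :=
  ssrbool.symmetric e /\ irreflexive e.

Definition graph_connected (n : nat) (e : rel 'I_n) : Prop :=
  forall x y : 'I_n, connect e x y.

Definition is_vertex_cover (n : nat) (e : rel 'I_n) (W : {set 'I_n}) : Prop :=
  forall x y, e x y -> (x \in W) || (y \in W).

Definition is_minimal_vertex_cover (n : nat) (e : rel 'I_n) (W : {set 'I_n})
  : Prop :=
  is_vertex_cover e W /\ (forall W' : {set 'I_n}, W' \proper W -> ~ is_vertex_cover e W').

Definition edge_gens (k : fieldType) (n : nat) (e : rel 'I_n)
  : {mpoly k[n]} -> Prop :=
  fun f => exists x y : 'I_n, e x y /\ f = 'X_x * 'X_y.

Definition edge_ideal (k : fieldType) (n : nat) (e : rel 'I_n) :=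
  ideal_gen (edge_gens (k := k) e).

(* J_s(R) = k[x_i^(l) : i < n, l <= s]; the variable x_i^(l) is indexed by
   mxvec_index i l : 'I_(n * s.+1). *)
Definition jvar (n s : nat) (i : 'I_n) (l : 'I_s.+1) : 'I_(n * s.+1) :=
  mxvec_index i l.

(* f(x^(0) + x^(1) t + ... + x^(s) t^s) as a polynomial in t over J_s(R). *)
Definition jet_subst (k : fieldType) (n s : nat) (f : {mpoly k[n]})
  : {poly {mpoly k[n * s.+1]}} :=
  mmap (fun c : k => (c%:MP_[n * s.+1])%:P)
       (fun i : 'I_n => \sum_(l < s.+1) ('X_(jvar i l))%:P * 'X^l) f.

(* The jet ideal J_s(I) of I = <gens>: generated by the coefficients
   alpha^(l), 0 <= l <= s, of f(x^(0) + ... + x^(s) t^s) for generators f. *)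
Definition jet_ideal (k : fieldType) (n s : nat) (gens : {mpoly k[n]} -> Prop)
  : {mpoly k[n * s.+1]} -> Prop :=
  ideal_gen (fun a => exists (f : {mpoly k[n]}) (l : 'I_s.+1),
                        gens f /\ a = (jet_subst s f)`_l).

Definition jet_var_ideal (k : fieldType) (n s : nat) (W : {set 'I_n})
  : {mpoly k[n * s.+1]} -> Prop :=
  ideal_gen (fun a => exists (x : 'I_n) (l : 'I_s.+1),
                        x \in W /\ a = 'X_(jvar x l)).

(* The ideal p = <J_s(W)> is the kernel of the substitution killing its
   variables, hence prime, and it contains J_s(I(G)) because W covers every
   edge.  By minimality each x in W has a neighbour y_x outside W, and
   u = prod_(x in W) (y_x^(0))^(s+1) lies outside p while u x^(l) lies in
   J_s(I(G)) for all x in W.  So the colon ideal J_s(I(G)) : u contains p, which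
   forces every prime between J_s(I(G)) and p, and every primary component whose
   radical is p, to equal p. *)

From mathcomp Require Import all_boot all_algebra.
From mathcomp Require Import mpoly.
From mathcomp Require Import ring zify.
From Stdlib Require Import Classical.
Set Implicit Arguments. Unset Strict Implicit. Unset Printing Implicit Defensive.
Import GRing.Theory.
Local Open Scope ring_scope.

Section Ideals.
Variable A : comPzRingType.
Implicit Types (I P Q S : A -> Prop) (f g : A).

Lemma ideal_sum I m (F : 'I_m -> A) :
  is_ideal I -> (forall i, I (F i)) -> I (\sum_(i < m) F i).
Proof. by case=> I0 [ID _] IF; apply: (big_ind I). Qed.

Lemma idealB I f g : is_ideal I -> I f -> I g -> I (f - g).
Proof.
case=> _ [ID IM] If Ig; apply: ID => //.
by rewrite -mulN1r; apply: IM.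
Qed.

Lemma ideal_gen_ideal S : is_ideal (ideal_gen S).
Proof.
split; [|split].
- exists 0%N, (fun _ => 0), (fun _ => 0); split; first by case.
  by rewrite big_ord0.
- move=> _ _ [m1 [a1 [g1 [S1 ->]]]] [m2 [a2 [g2 [S2 ->]]]].
  exists (m1 + m2)%N,
    (fun i => match split i with inl j => a1 j | inr j => a2 j end),
    (fun i => match split i with inl j => g1 j | inr j => g2 j end).
  split; first by move=> i; case: (split i).
  rewrite big_split_ord /=; congr (_ + _); apply: eq_bigr => i _.
    by rewrite (unsplitK (inl _ i)).
  by rewrite (unsplitK (inr _ i)).
- move=> a _ [m [b [g [Sg ->]]]]; exists m, (fun i => a * b i), g; split => //.
  by rewrite mulr_sumr; apply: eq_bigr => i _; rewrite mulrA.
Qed.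

Lemma ideal_gen_in S f : S f -> ideal_gen S f.
Proof.
by move=> Sf; exists 1%N, (fun _ => 1), (fun _ => f); rewrite big_ord1 mul1r.
Qed.

Lemma ideal_gen_sub S I :
  is_ideal I -> (forall f, S f -> I f) -> subideal (ideal_gen S) I.
Proof.
move=> HI SI _ [m [a [g [Sg ->]]]]; apply: ideal_sum => // i.
by case: HI => _ [_ IM]; apply/IM/SI.
Qed.

Lemma radical_sub I : subideal I (radical I).
Proof. by move=> f If; exists 1%N; rewrite expr1. Qed.

Lemma prime_ideal_prod P m (F : 'I_m -> A) :
  is_prime_ideal P -> (forall i, ~ P (F i)) -> ~ P (\prod_(i < m) F i).
Proof.
case=> _ [P1 PM]; elim: m F => [|m IH] F PF; first by rewrite big_ord0.
rewrite big_ord_recr /= => /PM [|]; last exact: PF.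
by apply: IH => i; apply: PF.
Qed.

Lemma prime_ideal_pow P f k : is_prime_ideal P -> ~ P f -> ~ P (f ^+ k).
Proof.
case=> _ [P1 PM] Pf; elim: k => [|k IH]; first by rewrite expr0.
by rewrite exprS => /PM [].
Qed.

Lemma primary_decomposition_radical_sub J m (Q : 'I_m -> A -> Prop) P :
  primary_decomposition J Q -> is_prime_ideal P -> subideal J P ->
  exists i, subideal (radical (Q i)) P.
Proof.
move=> [Qprim JQ] Pprime JP; apply: NNPP => noQ.
have witness i : exists fk : A * nat, Q i (fk.1 ^+ fk.2) /\ ~ P fk.1.
  apply: NNPP => nowit; apply: noQ; exists i => f [k Qfk].
  by apply: NNPP => Pf; apply: nowit; exists (f, k).
have [fk Hfk] := fin_all_exists witness.
apply: (@prime_ideal_prod P m (fun i => (fk i).1 ^+ (fk i).2)) => //.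
  by move=> i; apply: prime_ideal_pow => //; case: (Hfk i).
apply/JP/JQ => j; rewrite (bigD1 j) //= mulrC.
by case: (Qprim j) => [[_ [_ QM]] _]; apply/QM; case: (Hfk j).
Qed.

Lemma prime_ideal_same P Q :
  same_ideal P Q -> is_prime_ideal P -> is_prime_ideal Q.
Proof.
move=> PQ [[P0 [PD PM]] [P1 PMul]]; do ![split].
- exact/PQ.
- by move=> f g /PQ Pf /PQ Pg; apply/PQ/PD.
- by move=> a f /PQ Pf; apply/PQ/PM.
- by move/PQ.
- by move=> f g /PQ /PMul [] /PQ; [left|right].
Qed.

End Ideals.

Section PolyIdeals.
Variable A : comNzRingType.
Implicit Types (I : A -> Prop) (p q : {poly A}).

Lemma ideal_coefMl I p q l : is_ideal I -> (forall j, I p`_j) -> I (p * q)`_l.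
Proof.
move=> HI Ip; rewrite coefM; apply: ideal_sum => // j.
by case: HI => _ [_ IM]; rewrite mulrC; apply: IM.
Qed.

Lemma ideal_coefMr I p q l : is_ideal I -> (forall j, I q`_j) -> I (p * q)`_l.
Proof. by rewrite mulrC; apply: ideal_coefMl. Qed.

End PolyIdeals.

Section WitnessedPrime.
Variables (A : comPzRingType) (J P S : A -> Prop) (u : A).
Hypotheses (PS : same_ideal P (ideal_gen S)) (JP : subideal J P).
Hypotheses (Pu : ~ P u) (uS : forall a, S a -> J (u * a)).

Lemma witness_colon_sub Q : is_ideal Q -> subideal J Q ->
  (forall a, S a -> Q (u * a) -> Q a) -> subideal P Q.
Proof.
move=> HQ JQ colonQ f /PS; apply: ideal_gen_sub => // a Sa.
by apply/colonQ/JQ/uS.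
Qed.

Lemma witness_minimal_prime : is_prime_ideal P -> is_minimal_prime J P.
Proof.
move=> Pprime; do 2!split => //.
move=> Q [HQ [_ QM]] JQ QP f; split; first exact: QP.
by apply: witness_colon_sub => // a Sa /QM [] // /QP.
Qed.

Lemma witness_primary_sub Q : is_primary_ideal Q -> subideal J Q ->
  subideal (radical Q) P -> subideal P Q.
Proof.
move=> [HQ [_ QM]] JQ QP; apply: witness_colon_sub => // a Sa.
by rewrite mulrC => /QM [] // /QP.
Qed.

Lemma witness_primary_component m (Q : 'I_m -> A -> Prop) :
  is_prime_ideal P -> primary_decomposition J Q ->
  (exists i, same_ideal (radical (Q i)) P) /\
  (forall i, same_ideal (radical (Q i)) P -> same_ideal (Q i) P).
Proof.
move=> Pprime QJ; have [Qprim JQ] := QJ.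
have JQi i : subideal J (Q i) by move=> f /JQ.
split.
  have [i QP] := primary_decomposition_radical_sub QJ Pprime JP.
  exists i => f; split; first exact: QP.
  by move=> /(witness_primary_sub (Qprim i) (JQi i) QP); apply: radical_sub.
move=> i QP f; split; first by move=> /radical_sub /QP.
by apply: witness_primary_sub => // g /QP.
Qed.

End WitnessedPrime.

Lemma mpolyX_neq0 (R : nzRingType) (N : nat) (v : 'I_N) :
  ('X_v : {mpoly R[N]}) != 0.
Proof.
apply/eqP => /(congr1 (mcoeff U_(v))).
by rewrite mcoeffX eqxx mcoeff0 => /eqP; rewrite oner_eq0.
Qed.

Section VariableIdeal.
Variables (R : idomainType) (N : nat) (V : pred 'I_N).
Local Notation P := {mpoly R[N]}.

Definition var_ideal : P -> Prop :=
  ideal_gen (fun a => exists2 v, V v & a = 'X_v).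

Local Notation kill_vars :=
  (mmap (@mpolyC N R) (fun v => if V v then 0 else 'X_v)).

Lemma kill_varsX v : kill_vars 'X_v = if V v then 0 else 'X_v.
Proof. by rewrite mmapX mmap1U. Qed.

Lemma var_ideal_kill_vars f : var_ideal f -> kill_vars f = 0.
Proof.
apply: (ideal_gen_sub (I := fun f => kill_vars f = 0)).
  split; first by rewrite rmorph0.
  split; first by move=> f1 g /= kf kg; rewrite rmorphD /= kf kg addr0.
  by move=> a f1 /= kf; rewrite rmorphM /= kf mulr0.
by move=> _ [v Vv ->]; rewrite kill_varsX Vv.
Qed.

Lemma var_ideal_sub_kill_vars f : var_ideal (f - kill_vars f).
Proof.
have [I0 [ID IM]] := ideal_gen_ideal (fun a : P => exists2 v, V v & a = 'X_v).
have closedM g h : var_ideal (g - kill_vars g) -> var_ideal (h - kill_vars h) ->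
    var_ideal (g * h - kill_vars (g * h)).
  move=> Ig Ih; rewrite rmorphM /=.
  have -> : g * h - kill_vars g * kill_vars h =
      h * (g - kill_vars g) + kill_vars g * (h - kill_vars h) by ring.
  by apply: ID; apply: IM.
have monomial m : var_ideal ('X_[m] - kill_vars 'X_[m]).
  rewrite mpolyXE_id.
  apply: (big_ind (fun g => var_ideal (g - kill_vars g))) => //.
    by rewrite rmorph1 subrr.
  move=> i _; elim: (m i) => [|d IH]; first by rewrite !expr0 rmorph1 subrr.
  rewrite exprS; apply: closedM => //; rewrite kill_varsX.
  by case: ifP => Vi; rewrite ?subr0 ?subrr //; apply: ideal_gen_in; exists i.
elim/mpolyind: f => [|c m q _ _ IH]; first by rewrite rmorph0 subr0.
have kC : kill_vars c%:MP = c%:MP by rewrite mmapC.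
rewrite -mul_mpolyC rmorphD rmorphM /= kC.
have -> : c%:MP * 'X_[m] + q - (c%:MP * kill_vars 'X_[m] + kill_vars q) =
    c%:MP * ('X_[m] - kill_vars 'X_[m]) + (q - kill_vars q) by ring.
by apply: ID => //; apply/IM/monomial.
Qed.

Lemma var_idealE f : var_ideal f <-> kill_vars f = 0.
Proof.
split; first exact: var_ideal_kill_vars.
by move=> kf; have := var_ideal_sub_kill_vars f; rewrite kf subr0.
Qed.

Lemma var_ideal_prime : is_prime_ideal var_ideal.
Proof.
split; first exact: ideal_gen_ideal.
split; first by rewrite var_idealE rmorph1 => /eqP; rewrite oner_eq0.
move=> f g; rewrite !var_idealE rmorphM /= => /eqP.
by rewrite mulf_eq0 => /orP [] /eqP; auto.
Qed.

End VariableIdeal.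

Section Jets.
Variables (k : fieldType) (n s : nat).
Local Notation N := (n * s.+1)%N.
Local Notation P := {mpoly k[N]}.

Definition jet_X (x : 'I_n) (j : nat) : P := 'X_(jvar x (inord j)).

Definition jet_series (x : 'I_n) : {poly P} :=
  \sum_(l < s.+1) ('X_(jvar x l))%:P * 'X^l.

Lemma jvar_inj (x x' : 'I_n) (l l' : 'I_s.+1) :
  jvar x l = jvar x' l' -> x = x' /\ l = l'.
Proof.
by rewrite /jvar /mxvec_index => /cast_ord_inj /enum_rank_inj [-> ->].
Qed.

Lemma jet_subst_XM x y :
  jet_subst s ('X_x * 'X_y : {mpoly k[n]}) = jet_series x * jet_series y.
Proof.
have -> : jet_subst s ('X_x * 'X_y : {mpoly k[n]}) =
    mmap (polyC \o @mpolyC N k) jet_series ('X_x * 'X_y) by [].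
by rewrite rmorphM /= !mmapX !mmap1U.
Qed.

Lemma coef_jet_series x j :
  (jet_series x)`_j = if (j < s.+1)%N then jet_X x j else 0.
Proof.
rewrite coef_sum; case: ifP => [js|/negbT js]; last first.
  apply: big1 => l _; rewrite coefCM coefXn.
  by case: eqP js => [-> /negP[]|_ _]; rewrite ?mulr0.
rewrite (bigD1 (Ordinal js)) //= big1 => [|l /negbTE nl].
  rewrite coefCM coefXn eqxx mulr1 addr0 /jet_X.
  by congr 'X_(jvar _ _); apply: val_inj; rewrite /= inordK.
rewrite coefCM coefXn; case: eqP => [jl|_]; last by rewrite mulr0.
by move: nl; rewrite (_ : l = Ordinal js) ?eqxx //; apply: val_inj.
Qed.

Definition jet_vars (W : {set 'I_n}) : pred 'I_N :=
  [pred v | [exists x in W, exists l, v == jvar x l]].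

Lemma jet_var_idealE W :
  same_ideal (@jet_var_ideal k n s W) (var_ideal (jet_vars W)).
Proof.
move=> f; split; apply: ideal_gen_sub; try exact: ideal_gen_ideal.
  move=> _ [x [l [xW ->]]]; apply: ideal_gen_in; exists (jvar x l) => //.
  by apply/existsP; exists x; rewrite xW; apply/existsP; exists l.
move=> _ [v /existsP [x /andP [xW /existsP [l /eqP ->]]] ->].
by apply: ideal_gen_in; exists x, l.
Qed.

Lemma jet_var_ideal_prime W : is_prime_ideal (@jet_var_ideal k n s W).
Proof.
apply: (prime_ideal_same (P := var_ideal (jet_vars W))).
  by move=> f; rewrite jet_var_idealE.
exact: var_ideal_prime.
Qed.

End Jets.

Section EdgeJets.
Variables (k : fieldType) (n s : nat) (e : rel 'I_n).
Local Notation J := (@jet_ideal k n s (edge_gens (k := k) e)).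
Local Notation jet_X := (@jet_X k n s).
Local Notation jet_series := (@jet_series k n s).

Lemma jet_ideal_ideal : is_ideal J.
Proof. exact: ideal_gen_ideal. Qed.

Lemma jet_ideal_coef_edge x y l : e x y -> (l < s.+1)%N ->
  J (jet_series x * jet_series y)`_l.
Proof.
move=> exy ls; apply: ideal_gen_in; exists ('X_x * 'X_y), (Ordinal ls).
by rewrite jet_subst_XM; split => //; exists x, y.
Qed.

Lemma jet_edge_ideal_sub_var W :
  is_vertex_cover e W -> subideal J (@jet_var_ideal k n s W).
Proof.
have [pI_ideal _] := @jet_var_ideal_prime k n s W.
move=> cover; apply: ideal_gen_sub => // _ [_ [l [[x [y [exy ->]]] ->]]].
rewrite jet_subst_XM.
have var_coef z j : z \in W -> @jet_var_ideal k n s W (jet_series z)`_j.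
  move=> zW; have := @coef_jet_series k n s z j; case: ifP => _ ->.
    by apply: ideal_gen_in; exists z, (inord j).
  by case: pI_ideal.
case/orP: (cover x y exy) => [xW|yW].
  by apply: ideal_coefMl => // j; apply: var_coef.
by apply: ideal_coefMr => // j; apply: var_coef.
Qed.

Lemma coef_jet_series_mul x y l : (l < s.+1)%N ->
  (jet_series x * jet_series y)`_l =
    \sum_(j < l.+1) jet_X x j * jet_X y (l - j)%N.
Proof.
move=> ls; rewrite coefM; apply: eq_bigr => j _.
have js : (j < s.+1)%N by apply: leq_trans ls; apply: ltn_ord.
have ljs : (l - j < s.+1)%N by apply: leq_ltn_trans ls; apply: leq_subr.
congr (_ * _).
  by have := @coef_jet_series k n s x j; rewrite js.
by have := @coef_jet_series k n s y (l - j)%N; rewrite ljs.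
Qed.

(* (y^(0))^l times the l-th coefficient of the jet of x y is x^(l) (y^(0))^(l+1)
   plus multiples of the x^(j) (y^(0))^(j+1), j < l. *)
Lemma jet_ideal_X_mul_pow x y l : e x y -> (l < s.+1)%N ->
  J (jet_X x l * jet_X y 0 ^+ l.+1).
Proof.
move=> exy; have [_ [_ JM]] := jet_ideal_ideal.
elim/ltn_ind: l => l IH ls; set Y := jet_X y 0.
have -> : jet_X x l * Y ^+ l.+1 = Y ^+ l * (jet_series x * jet_series y)`_l -
    \sum_(j < l) jet_X y (l - j)%N * (jet_X x j * Y ^+ l).
  rewrite coef_jet_series_mul // big_ord_recr /= subnn mulrDr mulr_sumr.
  rewrite (eq_bigr (fun j : 'I_l => jet_X y (l - j)%N * (jet_X x j * Y ^+ l)));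
    last by move=> j _; rewrite [LHS]mulrCA [RHS]mulrC -mulrA.
  by rewrite addrC addKr exprSr [RHS]mulrCA.
apply: idealB; first exact: jet_ideal_ideal.
  by apply/JM/jet_ideal_coef_edge.
apply: ideal_sum => [|j]; first exact: jet_ideal_ideal.
have jl := ltn_ord j; apply: (JM).
have -> : Y ^+ l = Y ^+ (l - j.+1)%N * Y ^+ j.+1 by rewrite -exprD subnK.
by rewrite mulrCA; apply/JM/IH => //; lia.
Qed.

End EdgeJets.

Section MinimalCover.
Variables (n : nat) (e : rel 'I_n) (W : {set 'I_n}).
Hypotheses (simple : simple_graph e) (minW : is_minimal_vertex_cover e W).

Lemma minimal_cover_outer_neighbor x :
  x \in W -> exists y, e x y && (y \notin W).
Proof.
have [[sym irr] [cover min]] := (simple, minW).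
move=> xW; apply: NNPP => noy; apply: (min (W :\ x)); first exact: properD1.
have inW y : e x y -> y \in W.
  by move=> exy; apply: NNPP => /negP yW; apply: noy; exists y; rewrite exy.
move=> a b eab; rewrite !in_setD1.
case: (eqVneq a x) => [ax|ax]; case: (eqVneq b x) => [bx|bx] /=.
- by move: eab; rewrite ax bx irr.
- by rewrite inW ?orbT // -ax.
- by rewrite inW // -bx sym.
- exact: cover.
Qed.

Definition outer_neighbor x : 'I_n := odflt x [pick y | e x y && (y \notin W)].

Lemma outer_neighborP x :
  x \in W -> e x (outer_neighbor x) && (outer_neighbor x \notin W).
Proof.
move=> /minimal_cover_outer_neighbor [y eyW]; rewrite /outer_neighbor.
by case: pickP => [//|/(_ y)]; rewrite eyW.
Qed.

End MinimalCover.

Section CoverWitness.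
Variables (k : fieldType) (n s : nat) (e : rel 'I_n) (W : {set 'I_n}).
Hypotheses (simple : simple_graph e) (minW : is_minimal_vertex_cover e W).
Local Notation J := (@jet_ideal k n s (edge_gens (k := k) e)).
Local Notation p := (@jet_var_ideal k n s W).
Local Notation jet_X := (@jet_X k n s).
Local Notation nbr := (outer_neighbor e W).

Definition cover_witness : {mpoly k[n * s.+1]} :=
  \prod_(x in W) jet_X (nbr x) 0 ^+ s.+1.

Lemma jet_vars_outer_neighbor x (j : 'I_s.+1) :
  x \in W -> @jet_vars n s W (jvar (nbr x) j) = false.
Proof.
move=> /(outer_neighborP simple minW) /andP [_ yW].
apply/existsP => [[x' /andP [x'W /existsP [l /eqP /jvar_inj [yx' _]]]]].
by move: yW; rewrite yx' x'W.
Qed.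

Lemma cover_witness_notin : ~ p cover_witness.
Proof.
move=> /jet_var_idealE /var_idealE /eqP; apply/negP.
rewrite rmorph_prod; apply/prodf_neq0 => x xW.
rewrite rmorphXn expf_neq0 //= kill_varsX.
by rewrite jet_vars_outer_neighbor // mpolyX_neq0.
Qed.

Lemma cover_witness_mulX x l : x \in W -> J (cover_witness * 'X_(jvar x l)).
Proof.
move=> xW; have [_ [_ JM]] := jet_ideal_ideal k s e.
have /andP [exy _] := outer_neighborP simple minW xW.
have ls : (l < s.+1)%N := ltn_ord l.
have -> : 'X_(jvar x l) = jet_X x l by rewrite /jet_X inord_val.
rewrite /cover_witness (bigD1 x) //=; set Y := jet_X (nbr x) 0.
have -> : Y ^+ s.+1 = Y ^+ (s - l)%N * Y ^+ l.+1 by rewrite -exprD addnS subnK.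
set R := \prod_(i in W | i != x) _.
rewrite [_ * R]mulrAC -[_ * jet_X x l]mulrA (mulrC (Y ^+ l.+1)).
by apply/JM/jet_ideal_X_mul_pow.
Qed.

End CoverWitness.

Unset Implicit Arguments.
Theorem mainTheorem4 (k : fieldType) (n : nat) (e : rel 'I_n)
  (Hsimple : simple_graph e) (Hconn : graph_connected e)
  (Hedge : exists x y : 'I_n, e x y)
  (W : {set 'I_n}) (HW : is_minimal_vertex_cover e W) (s : nat) :
  let p := @jet_var_ideal k n s W in
  let J := @jet_ideal k n s (edge_gens (k := k) e) in
  is_minimal_prime J p /\
  (forall (m : nat) (Q : 'I_m -> {mpoly k[n * s.+1]} -> Prop),
      primary_decomposition J Q ->
      (exists i, same_ideal (radical (Q i)) p) /\
      (forall i, same_ideal (radical (Q i)) p -> same_ideal (Q i) p)).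
Proof.
move=> p J.
have pE : same_ideal p p by [].
have Jp : subideal J p by apply: jet_edge_ideal_sub_var; case: HW.
have pu := @cover_witness_notin k n s e W Hsimple HW.
have uS a : (exists x l, x \in W /\ a = 'X_(@jvar n s x l)) ->
    J (cover_witness k s e W * a).
  by move=> [x [l [xW ->]]]; apply: cover_witness_mulX.
have p_prime := jet_var_ideal_prime k s W.
split; first exact: (witness_minimal_prime pE Jp pu uS p_prime).
by move=> m Q; apply: (witness_primary_component pE Jp pu uS p_prime).
Qed.
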